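(* Let $\sigma_1,\sigma_2>0$, $\beta\in(0,1)$, $r\in(0,1)$ be fixed, and let $n\to\infty$ and $p\to\infty$ with $\log(n)/p\to0$. Set $\epsilon=n^{-\beta}$ and $A=\sqrt{2r\log n}$. Consider the testing problem for $n$ i.i.d. observations $\mathbf X_1,\dots,\mathbf X_n\in\mathbb R^p$: \[ H_0:\ \mathbf X_i\sim N(0\cdot\mathbf 1_p,\sigma_1^2\mathbf I_p),\qquad H_1:\ \mathbf X_i\sim(1-\epsilon)N(0\cdot\mathbf 1_p,\sigma_1^2\mathbf I_p)+\epsilon N(A\mathbf 1_p,\sigma_2^2\mathbf I_p),\quad 1\le i\le n. \] Then for the likelihood ratio test (rejecting $H_0$ when the likelihood ratio of $H_1$ to $H_0$ exceeds $1$), the sum of the type I and type II error probabilities tends to $0$.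
   Context: $\mathbf 1_p$ is the all-ones vector in $\mathbb R^p$ and $\mathbf I_p$ the $p\times p$ identity; both hypotheses are simple (all parameters known). *)

From HB Require Import structures.
From mathcomp Require Import all_boot all_order all_algebra.
From mathcomp Require Import all_classical all_reals all_analysis.
Set Implicit Arguments. Unset Strict Implicit. Unset Printing Implicit Defensive.
Import Order.TTheory GRing.Theory Num.Def Num.Theory.
Import numFieldNormedType.Exports.
Local Open Scope classical_set_scope.
Local Open Scope ring_scope.

(* Iterated Lebesgue integral over R^k (coordinates 0..k-1 of a point
   v : nat -> R; coordinates >= k are fixed to 0).  For nonnegative
   measurable integrands this is the Lebesgue integral over R^k (Tonelli). *)
Fixpoint iint {R : realType} (k : nat) (F : (nat -> R) -> \bar R) : \bar R :=
  match k with
  | 0 => F (fun _ => 0)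
  | k'.+1 => (\int[@lebesgue_measure R]_(x in [set: R])
                iint k' (fun v => F (fun j => if j == k' then x else v j)))%E
  end.

Section Model.
Variables (R : realType) (s1 s2 eps A : R) (n p : nat).

(* Data matrix X (n observations in R^p) encoded as a point of R^(n*p):
   X_{ij} = x (i * p + j). *)
Definition obs (x : nat -> R) (i j : nat) : R := x (i * p + j)%N.

Definition dens0 (y : nat -> R) : R := \prod_(j < p) normal_pdf 0 s1 (y j).
Definition dens1 (y : nat -> R) : R :=
  (1 - eps) * \prod_(j < p) normal_pdf 0 s1 (y j)
  + eps * \prod_(j < p) normal_pdf A s2 (y j).

Definition lik0 (x : nat -> R) : R := \prod_(i < n) dens0 (obs x i).
Definition lik1 (x : nat -> R) : R := \prod_(i < n) dens1 (obs x i).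

Definition lrt_reject (x : nat -> R) : bool := 1 < lik1 x / lik0 x.

Definition type1_error : \bar R :=
  iint (n * p) (fun x => (lik0 x * (lrt_reject x)%:R)%:E).
Definition type2_error : \bar R :=
  iint (n * p) (fun x => (lik1 x * (~~ lrt_reject x)%:R)%:E).
End Model.

From HB Require Import structures.
From mathcomp Require Import all_boot all_order all_algebra.
From mathcomp Require Import all_classical all_reals all_analysis.
From mathcomp Require Import ring lra measurable_realfun.
Import Order.TTheory GRing.Theory Num.Def Num.Theory.
Import numFieldNormedType.Exports.
Import HBNNSimple.
Set Implicit Arguments. Unset Strict Implicit. Unset Printing Implicit Defensive.
Local Open Scope classical_set_scope.
Local Open Scope ring_scope.

(* Bhattacharyya bound.  On the rejection region of the likelihood ratio test
   lik0 <= sqrt (lik0 lik1), and off it lik1 <= sqrt (lik0 lik1), so each error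
   is at most the affinity, the integral of sqrt (lik0 lik1) over R^(n p),
   which factorises over the n observations.  For one observation
   sqrt (f0 ((1 - eps) f0 + eps f1)) <= sqrt (1 - eps) f0 + sqrt eps sqrt (f0 f1),
   and coordinatewise the geometric mean of the N(0, s1^2) and N(A, s2^2)
   densities is at most rho = exp (- A^2 / (4 (s1^2 + s2^2))) times a Gaussian
   density.  Hence the affinity is at most (sqrt (1 - eps) + sqrt eps rho^p)^n.
   With eps = n^-beta and A^2 = 2 r ln n, as soon as p exceeds a constant
   sqrt eps rho^p <= eps / n, so this is at most (1 - eps / 4)^n
   <= exp (- n^(1 - beta) / 4), which tends to 0. *)

Section integralT_nonmeasurable.
Context {R : realType}.
Local Notation mu := (@lebesgue_measure R).
Local Open Scope ereal_scope.

(* The integrands of [iint] are not known to be measurable; monotonicity and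
   scaling still hold because [ge0_integralTE] writes a nonnegative integral
   as the supremum of the integrals of the simple functions below it. *)
Lemma ge0_le_integralT (f g : R -> \bar R) :
  (forall x, 0 <= f x) -> (forall x, f x <= g x) ->
  \int[mu]_x f x <= \int[mu]_x g x.
Proof.
move=> f_ge0 fg.
have g_ge0 x : 0 <= g x by apply: le_trans (f_ge0 x) (fg x).
rewrite !ge0_integralTE//; apply: ereal_sup_le => _ [h /= hf <-].
by exists h => //= x; apply: le_trans (hf x) (fg x).
Qed.

Lemma ge0_integralZrT (f : R -> \bar R) (k : R) : (0 <= k)%R ->
  (forall x, 0 <= f x) -> \int[mu]_x (f x * k%:E) = \int[mu]_x f x * k%:E.
Proof.
have le_scale (g : R -> \bar R) (c : R) : (0 < c)%R -> (forall x, 0 <= g x) ->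
    \int[mu]_x (g x * c%:E) <= \int[mu]_x g x * c%:E.
  move=> c_gt0 g_ge0.
  have gc_ge0 x : 0 <= g x * c%:E by rewrite mule_ge0// lee_fin ltW.
  rewrite !ge0_integralTE//; apply: ge_ereal_sup => _ [h /= hg <-].
  have cV_ge0 : (0 <= c^-1)%R by rewrite invr_ge0 ltW.
  pose h' := scale_nnsfun h cV_ge0.
  have -> : sintegral mu h = sintegral mu (cst c \* h')%R.
    by apply: eq_sintegral => x /=; rewrite mulrA mulfV ?mul1r// gt_eqF.
  rewrite sintegralrM muleC lee_pmul2r ?lte_fin//.
  apply: ereal_sup_ubound; exists h' => //= x.
  by rewrite mulrC EFinM lee_pdivrMr//; apply: hg.
move=> k_ge0 f_ge0; have [->|k_neq0] := eqVneq k 0%R.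
  by rewrite mule0; under eq_integral do rewrite mule0; exact: integral0.
have k_gt0 : (0 < k)%R by rewrite lt_def k_neq0.
apply/eqP; rewrite eq_le le_scale//=.
have fk_ge0 x : 0 <= f x * k%:E by rewrite mule_ge0// lee_fin.
have kV_gt0 : (0 < k^-1)%R by rewrite invr_gt0.
have := le_scale _ _ kV_gt0 fk_ge0.
under eq_integral do rewrite -muleA -EFinM mulfV// mule1.
have kE_ge0 : 0 <= k%:E by rewrite lee_fin.
move=> /(lee_wpmul2r kE_ge0).
by rewrite -muleA -EFinM mulVf// mule1.
Qed.

End integralT_nonmeasurable.

Section iterated_integral.
Context {R : realType}.
Local Notation mu := (@lebesgue_measure R).
Local Open Scope ereal_scope.
Implicit Types (F : (nat -> R) -> \bar R) (k b : nat) (v u : nat -> R).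

Definition set_coord k (x : R) v : nat -> R := fun j => if j == k then x else v j.
Definition trunc_coords k v : nat -> R := fun j => if (j < k)%N then v j else 0%R.
Definition cat_coords k v u : nat -> R :=
  fun j => if (j < k)%N then v j else u (j - k)%N.

Definition depends_lt k (G : (nat -> R) -> R) :=
  forall v u, (forall j, (j < k)%N -> v j = u j) -> G v = G u.

Lemma iintS k F : iint k.+1 F = \int[mu]_x iint k (fun v => F (set_coord k x v)).
Proof. by []. Qed.

Lemma iint_trunc k F : iint k F = iint k (fun v => F (trunc_coords k v)).
Proof.
elim: k F => [|k IH] F; first by congr F; apply/funext.
rewrite !iintS; apply: eq_integral => x _.
rewrite IH [in RHS]IH; congr iint; apply/funext => v; congr F.
apply/funext => j; rewrite /set_coord /trunc_coords ltnS.
by case: ltngtP => //= ->; rewrite eqxx.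
Qed.

Lemma iint_cat k b F :
  iint (k + b) F = iint b (fun u => iint k (fun v => F (cat_coords k v u))).
Proof.
elim: b F => [|b IH] F.
  rewrite addn0 /= iint_trunc [in RHS]iint_trunc; congr iint; apply/funext => v.
  by congr F; apply/funext => j; rewrite /cat_coords /trunc_coords; case: ifP.
rewrite addnS !iintS; apply: eq_integral => x _.
rewrite IH; congr iint; apply/funext => u; congr iint; apply/funext => v.
congr F; apply/funext => j; rewrite /set_coord /cat_coords.
have [jk|kj] := ltnP j k; last by rewrite -{1}(subnKC kj) eqn_add2l.
by rewrite ltn_eqF// ltn_addr.
Qed.

Lemma iint_ge0 k F : (forall v, 0 <= F v) -> 0 <= iint k F.
Proof.
elim: k F => [|k IH] F F_ge0 //=.
by apply: integral_ge0 => x _; apply: IH.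
Qed.

Lemma ge0_le_iint k F G : (forall v, 0 <= F v) -> (forall v, F v <= G v) ->
  iint k F <= iint k G.
Proof.
elim: k F G => [|k IH] F G F_ge0 FG //=.
by apply: ge0_le_integralT => x; [apply: iint_ge0 | apply: IH].
Qed.

Lemma ge0_iintZr k F (c : R) : (0 <= c)%R -> (forall v, 0 <= F v) ->
  iint k (fun v => F v * c%:E) = iint k F * c%:E.
Proof.
move=> c_ge0; elim: k F => [|k IH] F F_ge0 //=.
under eq_integral do rewrite IH//.
by rewrite ge0_integralZrT// => x; apply: iint_ge0.
Qed.

Lemma iint_mul_cat k b (G h : (nat -> R) -> R) (c : R) :
  (forall v, 0 <= G v)%R -> (forall u, 0 <= h u)%R -> depends_lt k G ->
  iint k (fun v => (G v)%:E) = c%:E ->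
  iint (k + b) (fun x => (G x * h (fun j => x (k + j)%N))%:E) =
  c%:E * iint b (fun u => (h u)%:E).
Proof.
move=> G_ge0 h_ge0 G_dep G_int; rewrite iint_cat.
have c_ge0 : (0 <= c)%R by rewrite -lee_fin -G_int iint_ge0.
rewrite muleC -ge0_iintZr//.
congr iint; apply/funext => u.
rewrite -G_int muleC -ge0_iintZr//.
congr iint; apply/funext => v; rewrite EFinM; congr (_%:E * _%:E).
  by apply: G_dep => j jk; rewrite /cat_coords jk.
by congr h; apply/funext => j; rewrite /cat_coords ltnNge leq_addr /= addKn.
Qed.

Lemma iint_prod_obs p n (h : (nat -> R) -> R) (c : R) :
  (forall v, 0 <= h v)%R -> depends_lt p h -> iint p (fun v => (h v)%:E) = c%:E ->
  iint (n * p) (fun x => (\prod_(i < n) h (obs p x i))%:E) = (c ^+ n)%:E.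
Proof.
move=> h_ge0 h_dep h_int; elim: n => [|n IH]; first by rewrite /= big_ord0.
under eq_fun do rewrite big_ord_recr /=.
rewrite mulSnr (@iint_mul_cat (n * p) p _ h (c ^+ n)) ?h_int -?EFinM ?exprSr//.
- by move=> v; apply: prodr_ge0.
- move=> v u vu; apply: eq_bigr => i _; apply: h_dep => j jp; apply: vu.
  by rewrite (leq_trans _ (leq_mul (ltn_ord i) (leqnn p))) // mulSnr ltn_add2l.
Qed.

Lemma iint_mix_prod p (f g : R -> R) (a b : R) :
  measurable_fun setT f -> measurable_fun setT g ->
  (forall x, 0 <= f x)%R -> (forall x, 0 <= g x)%R ->
  \int[mu]_x (f x)%:E = 1 -> \int[mu]_x (g x)%:E = 1 ->
  (0 <= a)%R -> (0 <= b)%R ->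
  iint p (fun y => (a * \prod_(j < p) f (y j) + b * \prod_(j < p) g (y j))%:E) =
  (a + b)%:E.
Proof.
move=> mf mg f_ge0 g_ge0 f_int g_int; elim: p a b => [|p IH] a b a_ge0 b_ge0.
  by rewrite /= !big_ord0 !mulr1.
rewrite iintS.
transitivity (\int[mu]_x ((a * f x)%:E + (b * g x)%:E)).
  apply: eq_integral => x _; rewrite -EFinD -IH ?mulr_ge0//.
  congr iint; apply/funext => v; rewrite !big_ord_recr /= /set_coord eqxx.
  have prod_set (F : R -> R) : (\prod_(i < p)
      F (if widen_ord (leqnSn p) i == p :> nat then x else v (widen_ord (leqnSn p) i))
      = \prod_(i < p) F (v i))%R.
    by apply: eq_bigr => i _; rewrite /= ltn_eqF.
  by rewrite !prod_set; congr (_%:E); ring.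
rewrite ge0_integralD//=; first last.
- by apply/measurable_EFinP; apply: measurable_funM.
- by move=> x _; rewrite lee_fin mulr_ge0.
- by apply/measurable_EFinP; apply: measurable_funM.
- by move=> x _; rewrite lee_fin mulr_ge0.
under eq_integral do rewrite EFinM.
under [X in _ + X]eq_integral do rewrite EFinM.
rewrite !ge0_integralZl_EFin//= ?f_int ?g_int ?mule1 ?EFinD//;
  by [apply/measurable_EFinP | move=> x _; rewrite lee_fin].
Qed.

End iterated_integral.

Section sqrt_facts.
Context {R : rcfType}.

Lemma sqrtr_prod (I : Type) (r : seq I) (P : pred I) (F : I -> R) :
  (forall i, P i -> 0 <= F i) ->
  Num.sqrt (\prod_(i <- r | P i) F i) = \prod_(i <- r | P i) Num.sqrt (F i).
Proof.
move=> F_ge0; suff [] : 0 <= \prod_(i <- r | P i) F i /\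
    Num.sqrt (\prod_(i <- r | P i) F i) = \prod_(i <- r | P i) Num.sqrt (F i) by [].
elim/big_rec2: _ => [|i y1 y2 Pi [y2_ge0 <-]]; first by rewrite sqrtr1.
by rewrite mulr_ge0 ?F_ge0// sqrtrM ?F_ge0.
Qed.

Lemma sqrtrD_le (u v : R) : 0 <= u -> 0 <= v ->
  Num.sqrt (u + v) <= Num.sqrt u + Num.sqrt v.
Proof.
move=> u_ge0 v_ge0.
rewrite -(ger0_norm (addr_ge0 (sqrtr_ge0 u) (sqrtr_ge0 v))) -sqrtr_sqr.
rewrite ler_sqrt ?sqr_ge0// sqrrD !sqr_sqrtr// -addrA lerD2l lerDr.
by rewrite mulrn_wge0// mulr_ge0 ?sqrtr_ge0.
Qed.

Lemma sqrtr_1B_le (e : R) : 0 <= e <= 1 -> Num.sqrt (1 - e) <= 1 - e / 2.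
Proof.
case/andP=> e_ge0 e_le1; have h_ge0 : 0 <= 1 - e / 2 by lra.
rewrite -(ger0_norm h_ge0) -sqrtr_sqr ler_sqrt ?sqr_ge0// expr2.
by have := sqr_ge0 (e / 2); rewrite expr2; lra.
Qed.

End sqrt_facts.

Section normal_geometric_mean.
Context {R : realType}.

(* Completing the square, sqrt (N(m1, s1^2) N(m2, s2^2)) is a multiple of the
   N(normal_gm_mean, normal_gm_var) density; bounding the normalising constants
   by AM-GM leaves the factor [normal_gm_coef s1 s2 (m1 - m2)]. *)
Definition normal_gm_var (s1 s2 : R) := 2 * s1 ^+ 2 * s2 ^+ 2 / (s1 ^+ 2 + s2 ^+ 2).
Definition normal_gm_mean (m1 m2 s1 s2 : R) :=
  (m1 * s2 ^+ 2 + m2 * s1 ^+ 2) / (s1 ^+ 2 + s2 ^+ 2).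
Definition normal_gm_coef (s1 s2 d : R) := expR (- d ^+ 2 / (4 * (s1 ^+ 2 + s2 ^+ 2))).

Lemma normal_pdf_gt0 (m s x : R) : 0 < s -> 0 < normal_pdf m s x.
Proof.
move=> s_gt0; rewrite normal_pdfE ?gt_eqF// mulr_gt0 ?expR_gt0//.
exact: normal_peak_gt0 (lt0r_neq0 s_gt0).
Qed.

Lemma normal_peakE (s : R) : 0 <= s -> normal_peak s = (s * Num.sqrt (pi *+ 2))^-1.
Proof.
move=> s_ge0; rewrite /normal_peak -mulrnAr sqrtrM ?sqr_ge0// sqrtr_sqr.
by rewrite ger0_norm.
Qed.

Section positive_deviations.
Variables (s1 s2 : R).
Hypotheses (s1_gt0 : 0 < s1) (s2_gt0 : 0 < s2).

Let S_gt0 : 0 < s1 ^+ 2 + s2 ^+ 2.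
Proof. by rewrite addr_gt0 ?exprn_gt0. Qed.

Lemma normal_gm_var_gt0 : 0 < normal_gm_var s1 s2.
Proof. by rewrite divr_gt0 ?mulr_gt0 ?exprn_gt0. Qed.

Lemma normal_funM (m1 m2 x : R) :
  normal_fun m1 s1 x * normal_fun m2 s2 x =
  (normal_gm_coef s1 s2 (m1 - m2) *
   normal_fun (normal_gm_mean m1 m2 s1 s2) (Num.sqrt (normal_gm_var s1 s2)) x) ^+ 2.
Proof.
rewrite /normal_fun /normal_gm_coef sqr_sqrtr ?ltW ?normal_gm_var_gt0//.
rewrite -!expRD -expRM_natr; congr expR.
rewrite /normal_gm_mean /normal_gm_var; field.
by rewrite !gt_eqF ?exprn_gt0 ?mulr_gt0 ?exprn_gt0.
Qed.

Lemma normal_peakM_le :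
  normal_peak s1 * normal_peak s2 <= normal_peak (Num.sqrt (normal_gm_var s1 s2)) ^+ 2.
Proof.
have c_gt0 : 0 < Num.sqrt (pi *+ 2 : R) by rewrite sqrtr_gt0 mulrn_wgt0 ?pi_gt0.
rewrite (normal_peakE (ltW s1_gt0)) (normal_peakE (ltW s2_gt0)).
rewrite normal_peakE ?sqrtr_ge0// -invfM exprVn exprMn sqr_sqrtr; last first.
  exact: ltW normal_gm_var_gt0.
rewrite lef_pV2 ?posrE; first last.
- by rewrite mulr_gt0 ?normal_gm_var_gt0 ?exprn_gt0.
- by rewrite !mulr_gt0.
rewrite [leRHS]mulrACA -expr2 ler_pM2r ?exprn_gt0// /normal_gm_var ler_pdivrMr//.
have := mulr_ge0 (mulr_ge0 (ltW s1_gt0) (ltW s2_gt0)) (sqr_ge0 (s1 - s2)).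
by rewrite !expr2; nra.
Qed.

Lemma sqrt_normal_pdfM_le (m1 m2 x : R) :
  Num.sqrt (normal_pdf m1 s1 x * normal_pdf m2 s2 x) <=
  normal_gm_coef s1 s2 (m1 - m2) *
  normal_pdf (normal_gm_mean m1 m2 s1 s2) (Num.sqrt (normal_gm_var s1 s2)) x.
Proof.
have sd_gt0 : 0 < Num.sqrt (normal_gm_var s1 s2) by rewrite sqrtr_gt0 normal_gm_var_gt0.
rewrite !normal_pdfE ?gt_eqF//= mulrACA normal_funM [leRHS]mulrCA.
rewrite -[leRHS]ger0_norm ?mulr_ge0 ?normal_peak_ge0 ?expR_ge0//.
rewrite -sqrtr_sqr [in leRHS]exprMn; apply: ler_wsqrtr.
by rewrite ler_wpM2r ?sqr_ge0 ?normal_peakM_le.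
Qed.

End positive_deviations.
End normal_geometric_mean.

Section likelihood_ratio_test.
Context {R : rcfType}.
Variables (l0 l1 : R).
Hypotheses (l0_gt0 : 0 < l0) (l1_ge0 : 0 <= l1).

Lemma lrt_reject_le_sqrtM : l0 * (1 < l1 / l0)%R%:R <= Num.sqrt (l0 * l1).
Proof.
have [reject|_] := ltrP 1 (l1 / l0); last by rewrite mulr0 sqrtr_ge0.
rewrite ltr_pdivlMr// mul1r in reject.
rewrite mulr1 -[leLHS](ger0_norm (ltW l0_gt0)) -sqrtr_sqr ler_wsqrtr//.
by rewrite expr2 ler_pM2l// ltW.
Qed.

Lemma lrt_accept_le_sqrtM : l1 * (~~ (1 < l1 / l0)%R)%:R <= Num.sqrt (l0 * l1).
Proof.
have [_|accept] := ltrP 1 (l1 / l0); first by rewrite mulr0 sqrtr_ge0.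
rewrite ler_pdivrMr// mul1r in accept.
by rewrite mulr1 -[leLHS](ger0_norm l1_ge0) -sqrtr_sqr ler_wsqrtr// expr2 ler_wpM2r.
Qed.

End likelihood_ratio_test.

Section bhattacharyya_bound.
Context {R : realType}.
Variables (s1 s2 eps A : R).
Hypotheses (s1_gt0 : 0 < s1) (s2_gt0 : 0 < s2) (eps_ge0 : 0 <= eps) (eps_le1 : eps <= 1).

Definition affinity_base p :=
  Num.sqrt (1 - eps) + Num.sqrt eps * normal_gm_coef s1 s2 (0 - A) ^+ p.

Definition dens_affinity_ub p (y : nat -> R) :=
  Num.sqrt (1 - eps) * \prod_(j < p) normal_pdf 0 s1 (y j) +
  Num.sqrt eps * normal_gm_coef s1 s2 (0 - A) ^+ p *
    \prod_(j < p) normal_pdf (normal_gm_mean 0 A s1 s2) (Num.sqrt (normal_gm_var s1 s2)) (y j).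

Lemma dens_affinity_ub_ge0 p y : 0 <= dens_affinity_ub p y.
Proof.
by rewrite addr_ge0 ?mulr_ge0 ?sqrtr_ge0 ?exprn_ge0 ?expR_ge0//;
  apply: prodr_ge0 => j _; exact: normal_pdf_ge0.
Qed.

Lemma sqrt_dens0_dens1_le p y :
  Num.sqrt (dens0 s1 p y * dens1 s1 s2 eps A p y) <= dens_affinity_ub p y.
Proof.
rewrite /dens0 /dens1 /dens_affinity_ub.
set P0 := \prod_(j < p) normal_pdf 0 s1 (y j).
set P1 := \prod_(j < p) normal_pdf A s2 (y j).
have P0_ge0 : 0 <= P0 by apply: prodr_ge0 => j _; exact: normal_pdf_ge0.
have P1_ge0 : 0 <= P1 by apply: prodr_ge0 => j _; exact: normal_pdf_ge0.
have -> : P0 * ((1 - eps) * P0 + eps * P1) = (1 - eps) * P0 ^+ 2 + eps * (P0 * P1) by ring.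
have eps1_ge0 : 0 <= 1 - eps by rewrite subr_ge0.
apply: le_trans (sqrtrD_le (mulr_ge0 eps1_ge0 (sqr_ge0 P0))
                           (mulr_ge0 eps_ge0 (mulr_ge0 P0_ge0 P1_ge0))) _.
rewrite sqrtrM// sqrtr_sqr ger0_norm// lerD2l sqrtrM// -mulrA.
rewrite ler_wpM2l ?sqrtr_ge0// /P0 /P1 -big_split sqrtr_prod /=; last first.
  by move=> j _; rewrite mulr_ge0 ?normal_pdf_ge0.
rewrite -[X in _ <= _ ^+ X * _](card_ord p) -prodr_const -big_split /=.
by apply: ler_prod => j _; rewrite sqrtr_ge0 sqrt_normal_pdfM_le.
Qed.

Lemma iint_dens_affinity_ub p :
  iint p (fun y => (dens_affinity_ub p y)%:E) = (affinity_base p)%:E.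
Proof.
apply: iint_mix_prod; rewrite ?mulr_ge0 ?sqrtr_ge0 ?exprn_ge0 ?expR_ge0//;
  by [exact: measurable_normal_pdf | move=> x; exact: normal_pdf_ge0
     | exact: integral_normal_pdf].
Qed.

Lemma lik0_gt0 n p x : 0 < lik0 s1 n p x.
Proof. by apply: prodr_gt0 => i _; apply: prodr_gt0 => j _; exact: normal_pdf_gt0. Qed.

Lemma lik1_ge0 n p x : 0 <= lik1 s1 s2 eps A n p x.
Proof.
apply: prodr_ge0 => i _; rewrite addr_ge0// mulr_ge0 ?subr_ge0//;
  by apply: prodr_ge0 => j _; exact: normal_pdf_ge0.
Qed.

Lemma sqrt_lik0_lik1_le n p x :
  Num.sqrt (lik0 s1 n p x * lik1 s1 s2 eps A n p x) <=
  \prod_(i < n) dens_affinity_ub p (obs p x i).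
Proof.
rewrite -big_split sqrtr_prod /=; last first.
  move=> i _; rewrite mulr_ge0 ?(prodr_ge0 _ (fun j _ => normal_pdf_ge0 _ _ _))//.
  by rewrite addr_ge0// mulr_ge0 ?subr_ge0// prodr_ge0// => j _; exact: normal_pdf_ge0.
by apply: ler_prod => i _; rewrite sqrtr_ge0 sqrt_dens0_dens1_le.
Qed.

Lemma iint_prod_dens_affinity_ub n p :
  iint (n * p) (fun x => (\prod_(i < n) dens_affinity_ub p (obs p x i))%:E) =
  (affinity_base p ^+ n)%:E.
Proof.
apply: iint_prod_obs; [exact: dens_affinity_ub_ge0 | | exact: iint_dens_affinity_ub].
by move=> v u vu; rewrite /dens_affinity_ub; congr (_ * _ + _ * _);
  apply: eq_bigr => j _; rewrite vu.
Qed.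

Local Open Scope ereal_scope.

Lemma type1_error_ge0 n p : 0 <= type1_error s1 s2 eps A n p.
Proof. by apply: iint_ge0 => x; rewrite lee_fin mulr_ge0 ?ler0n// ltW ?lik0_gt0. Qed.

Lemma type2_error_ge0 n p : 0 <= type2_error s1 s2 eps A n p.
Proof. by apply: iint_ge0 => x; rewrite lee_fin mulr_ge0 ?ler0n ?lik1_ge0. Qed.

Lemma type1_error_le n p : type1_error s1 s2 eps A n p <= (affinity_base p ^+ n)%:E.
Proof.
rewrite -iint_prod_dens_affinity_ub; apply: ge0_le_iint => x; rewrite lee_fin.
  by rewrite mulr_ge0 ?ler0n// ltW ?lik0_gt0.
apply: le_trans (sqrt_lik0_lik1_le n p x).
by apply: lrt_reject_le_sqrtM; rewrite ?lik0_gt0 ?lik1_ge0.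
Qed.

Lemma type2_error_le n p : type2_error s1 s2 eps A n p <= (affinity_base p ^+ n)%:E.
Proof.
rewrite -iint_prod_dens_affinity_ub; apply: ge0_le_iint => x; rewrite lee_fin.
  by rewrite mulr_ge0 ?ler0n ?lik1_ge0.
apply: le_trans (sqrt_lik0_lik1_le n p x).
by apply: lrt_accept_le_sqrtM; rewrite ?lik0_gt0 ?lik1_ge0.
Qed.

End bhattacharyya_bound.

Section sparse_regime.
Context {R : realType}.

Definition mix_prop (beta : R) n := (n%:R : R) `^ (- beta).
Definition signal (r : R) n := Num.sqrt (2 * r * ln (n%:R : R)).

Lemma sqrtr_expR (u : R) : Num.sqrt (expR u) = expR (u / 2).
Proof.
have -> : expR u = expR (u / 2) ^+ 2 by rewrite -expRM_natr -mulrA mulVf// mulr1.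
by rewrite sqrtr_sqr ger0_norm ?expR_ge0.
Qed.

Lemma expr1B_le_expRN (e : R) n : 0 <= e <= 1 -> (1 - e) ^+ n <= expR (- (e * n%:R)).
Proof.
case/andP=> e_ge0 e_le1; rewrite -mulNr expRM_natr.
by apply: lerXn2r; rewrite ?nnegrE ?expR_ge0 ?subr_ge0//; have := expR_ge1Dx (- e); lra.
Qed.

Variables (beta : R) (n : nat).
Hypotheses (beta_gt0 : 0 < beta) (n_gt0 : (0 < n)%N).

Lemma mix_prop_ge0 : 0 <= mix_prop beta n.
Proof. exact: powR_ge0. Qed.

Lemma mix_propE : mix_prop beta n = expR (- beta * ln (n%:R : R)).
Proof. by rewrite /mix_prop /powR pnatr_eq0 gtn_eqF. Qed.

Lemma mix_prop_le1 : mix_prop beta n <= 1.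
Proof.
by rewrite mix_propE -[leRHS]expR0 ler_expR mulNr oppr_le0 mulr_ge0 ?ln_ge0 ?ler1n// ltW.
Qed.

Lemma mix_propM_natr : mix_prop beta n * n%:R = (n%:R : R) `^ (1 - beta).
Proof.
rewrite mix_propE /powR pnatr_eq0 gtn_eqF//= -[X in _ * X = _]lnK ?posrE ?ltr0n//.
by rewrite -expRD; congr expR; ring.
Qed.

End sparse_regime.

Section affinity_decay.
Context {R : realType}.
Variables (s1 s2 beta r : R) (n p : nat).
Hypotheses (s1_gt0 : 0 < s1) (s2_gt0 : 0 < s2) (beta_gt0 : 0 < beta) (r_gt0 : 0 < r).
Hypothesis n_ge4 : (4 <= n)%N.
(* As signal r n ^+ 2 = 2 r ln n, sqrt eps * normal_gm_coef ^+ p equals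
   n ^ (- beta / 2 - p r / (2 (s1^2 + s2^2))), which is at most
   eps / n = n ^ (- beta - 1) exactly under this bound. *)
Hypothesis p_large : 2 * (s1 ^+ 2 + s2 ^+ 2) * (1 + beta / 2) / r <= p%:R.

Let n_gt1 : (1 < n)%N. Proof. exact: leq_trans n_ge4. Qed.
Let n_gt0 : (0 < n)%N. Proof. exact: ltnW n_gt1. Qed.

Lemma sqrt_mix_prop_gm_coef_le :
  Num.sqrt (mix_prop beta n) * normal_gm_coef s1 s2 (0 - signal r n) ^+ p <=
  mix_prop beta n / n%:R.
Proof.
set S := s1 ^+ 2 + s2 ^+ 2; have S_gt0 : 0 < S by rewrite addr_gt0 ?exprn_gt0.
set L := ln (n%:R : R); have L_gt0 : 0 < L by rewrite ln_gt0// ltr1n.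
set Q := L * (p%:R * r).
have Q_ge : L * (1 + beta / 2) <= Q / (2 * S).
  rewrite ler_pdivlMr ?mulr_gt0//.
  have -> : L * (1 + beta / 2) * (2 * S) = L * (2 * S * (1 + beta / 2)) by ring.
  apply: ler_wpM2l; first exact: ltW.
  by rewrite -ler_pdivrMr.
rewrite mix_propE// sqrtr_expR /normal_gm_coef sub0r sqrrN sqr_sqrtr; last first.
  by rewrite !mulr_ge0 ?ltW.
rewrite -expRM_natr -expRD -[in leRHS](lnK (_ : n%:R \in Num.pos)) ?posrE ?ltr0n//.
rewrite -expRN -expRD ler_expR expRK -/L.
have -> : - (2 * r * L) / (4 * S) * p%:R = - (Q / (2 * S)) by rewrite /Q; field; rewrite gt_eqF.
lra.
Qed.

Lemma affinity_base_le :
  affinity_base s1 s2 (mix_prop beta n) (signal r n) p <= 1 - mix_prop beta n / 4.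
Proof.
have eps_ge0 := mix_prop_ge0 beta n.
have eps_le1 : mix_prop beta n <= 1 by apply: mix_prop_le1.
have eps_n : mix_prop beta n / n%:R <= mix_prop beta n / 4.
  by rewrite ler_wpM2l// lef_pV2 ?posrE ?ltr0n ?ler_nat.
have eps_01 : 0 <= mix_prop beta n <= 1 by rewrite eps_ge0.
have := sqrtr_1B_le eps_01.
have := sqrt_mix_prop_gm_coef_le; rewrite /affinity_base; lra.
Qed.

Lemma affinity_base_exprn_le :
  affinity_base s1 s2 (mix_prop beta n) (signal r n) p ^+ n <=
  expR (- ((n%:R : R) `^ (1 - beta) / 4)).
Proof.
have eps_ge0 := mix_prop_ge0 beta n.
have eps_le1 : mix_prop beta n <= 1 by apply: mix_prop_le1.
apply: le_trans (_ : (1 - mix_prop beta n / 4) ^+ n <= _).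
  apply: lerXn2r; rewrite ?nnegrE ?affinity_base_le//; last lra.
  by rewrite /affinity_base addr_ge0 ?mulr_ge0 ?sqrtr_ge0 ?exprn_ge0 ?expR_ge0.
have eps4_01 : 0 <= mix_prop beta n / 4 <= 1 by apply/andP; split; lra.
apply: le_trans (expr1B_le_expRN n eps4_01) _.
by rewrite -mix_propM_natr// mulrAC.
Qed.

End affinity_decay.

Lemma cvg_expRN_natr_powR {R : realType} (a : R) (u : nat -> nat) : 0 < a ->
  (fun k => (u k)%:R : R) @ \oo --> +oo ->
  (fun k => expR (- ((u k)%:R `^ a / 4))) @ \oo --> 0.
Proof.
move=> a_gt0 u_cvg; apply: (cvg_comp _ _ _ (@cvgr_expR R)).
apply/cvgryPge => M; near=> k.
have u_ge : expR (4 * M / a) <= (u k)%:R by near: k; exact: ((cvgryPge _).1 u_cvg).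
have u_gt0 : 0 < (u k)%:R :> R by apply: lt_le_trans u_ge; exact: expR_gt0.
have ln_ge : 4 * M <= a * ln (u k)%:R.
  by rewrite -ler_pdivrMl// -ler_expR lnK ?posrE// mulrC.
rewrite /powR /= gt_eqF//=; have := expR_ge1Dx (a * ln (u k)%:R); lra.
Unshelve. all: by end_near.
Qed.

Theorem theorem2p8 (R : realType) (s1 s2 beta r : R)
  (hs1 : 0 < s1) (hs2 : 0 < s2)
  (hbeta : 0 < beta < 1) (hr : 0 < r < 1)
  (nn pp : nat -> nat)
  (hn : (fun k => (nn k)%:R : R) @ \oo --> +oo)
  (hp : (fun k => (pp k)%:R : R) @ \oo --> +oo)
  (hlog : (fun k => ln ((nn k)%:R : R) / (pp k)%:R) @ \oo --> (0 : R)) :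
  (fun k =>
     let n := nn k in let p := pp k in
     let eps := (n%:R : R) `^ (- beta) in
     let A := Num.sqrt (2 * r * ln (n%:R : R)) in
     (type1_error s1 s2 eps A n p + type2_error s1 s2 eps A n p)%E)
  @ \oo --> 0%E.
Proof.
case/andP: hbeta => beta_gt0 beta_lt1; case/andP: hr => r_gt0 _.
pose b k := expR (- ((nn k)%:R `^ (1 - beta) / 4)).
have b_cvg0 : b @ \oo --> 0 by apply: cvg_expRN_natr_powR hn; rewrite subr_gt0.
have b_cvg : (fun k => (b k + b k)%:E) @ \oo --> 0%E.
  by apply: cvg_EFin; [near=> k | rewrite -[0](addr0 0); apply: cvgD].
apply: (squeeze_cvge _ (cvg_cst 0%E) b_cvg); near=> k; cbv zeta.
have n_ge4 : (4 <= nn k)%N by rewrite -(ler_nat R); near: k; exact: ((cvgryPge _).1 hn).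
have p_large : 2 * (s1 ^+ 2 + s2 ^+ 2) * (1 + beta / 2) / r <= (pp k)%:R.
  by near: k; exact: ((cvgryPge _).1 hp).
have eps_ge0 := mix_prop_ge0 beta (nn k).
have eps_le1 : mix_prop beta (nn k) <= 1 by apply: mix_prop_le1 => //; exact: leq_trans n_ge4.
have decay := affinity_base_exprn_le hs1 hs2 beta_gt0 r_gt0 n_ge4 p_large.
rewrite adde_ge0 ?type1_error_ge0 ?type2_error_ge0//=.
apply: le_trans (leeD (type1_error_le _ hs1 hs2 eps_ge0 eps_le1 _ _)
                      (type2_error_le _ hs1 hs2 eps_ge0 eps_le1 _ _)) _.
by rewrite -EFinD lee_fin lerD.
Unshelve. all: by end_near.
Qed.
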